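(* Let $n\ge3$ be an even integer and let $x\in\mathcal{D}_n$ have order $m$. Then the degree of $x$ in $OD(\mathcal{D}_n)$ is $$\deg(x)=\begin{cases} m-2\phi(m)+\sum_{\lambda\mid\frac{n}{m}}\phi(\lambda m), & m \text{ odd},\ m>1,\\ \sum_{\lambda\mid\frac{n}{2}}\phi(2\lambda), & m=2,\\ n+m-2\phi(m)+\sum_{\lambda\mid\frac{n}{m}}\phi(\lambda m), & m\text{ even},\ m>2,\\ 2n-1, & m=1,\end{cases}$$ where $\phi$ is Euler's totient function.
   Context: The dihedral group $\mathcal{D}_n$ ($n\ge3$) is the group $\langle a,b\mid a^n=b^2=(ab)^2=e\rangle$ of order $2n$. For a finite group $G$, $o(x)$ denotes the order of $x\in G$. The order-divisor graph $OD(G)$ is the simple undirected graph with vertex set $G$, in which two distinct vertices $x,y$ are adjacent if and only if $o(x)\neq o(y)$ and either $o(x)\mid o(y)$ or $o(y)\mid o(x)$. *)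

From mathcomp Require Import all_boot all_order all_algebra all_fingroup all_solvable.
Set Implicit Arguments. Unset Strict Implicit. Unset Printing Implicit Defensive.

Definition od_adj (gT : finGroupType) (x y : gT) : bool :=
  [&& x != y, #[x]%g != #[y]%g & (#[x]%g %| #[y]%g) || (#[y]%g %| #[x]%g)].

Definition od_deg (gT : finGroupType) (G : {set gT}) (x : gT) : nat :=
  #|[set y in G | od_adj x y]|.

From mathcomp Require Import all_boot all_order all_algebra all_fingroup all_solvable.
From mathcomp Require Import zify.
Set Implicit Arguments. Unset Strict Implicit. Unset Printing Implicit Defensive.
Local Open Scope group_scope.

(* Write D_n as a cyclic rotation subgroup <[r]> of order n together with n
   reflections, all of order 2.  Adjacency in OD(G) only depends on the two
   orders, so the neighbours of x of order m are the rotations whose order is a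
   proper divisor or a proper multiple of m, plus all n reflections when m and 2
   are distinct and comparable for divisibility, i.e. when m = 1 or m > 2 is even.
   In a cyclic group of order n and for d | n there are exactly d elements of
   order dividing d and phi(d) of order d, which gives m - 2 phi(m) + S after
   inclusion-exclusion. *)

Lemma card_fibers (T : finType) (A : {set T}) (f : T -> nat) (s : seq nat) :
  uniq s -> {in A, forall y, f y \in s} ->
  #|A| = (\sum_(d <- s) #|[set y in A | f y == d]|)%N.
Proof.
move=> s_uniq fA; rewrite -sum1_card.
under [RHS]eq_bigr => d _ do rewrite -sum1_card big_mkcond /=.
rewrite exchange_big /= big_mkcond /=; apply: eq_bigr => y _.
rewrite -big_mkcond /= sum1_count.
case: (boolP (y \in A)) => Ay.
  rewrite (eq_count (a2 := pred1 (f y))) ?count_uniq_mem ?fA //.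
  by move=> d; rewrite /= inE Ay eq_sym.
by rewrite (eq_count (a2 := pred0)) ?count_pred0 // => d; rewrite inE (negPf Ay).
Qed.

Definition od_rel (m d : nat) : bool := (d != m) && ((m %| d) || (d %| m)).

Lemma od_adjE (gT : finGroupType) (x y : gT) : od_adj x y = od_rel #[x] #[y].
Proof.
rewrite /od_adj /od_rel [#[y] == _]eq_sym.
by case: (eqVneq x y) => [->|_] //=; rewrite eqxx.
Qed.

Section CyclicOrderCount.
Variables (gT : finGroupType) (r : gT).

Lemma order_expg_divn d : d %| #[r] -> #[r ^+ (#[r] %/ d)] = d.
Proof.
move=> dr; have d_gt0 : (0 < d)%N by rewrite (dvdn_gt0 (order_gt0 r)).
rewrite orderXdiv ?dvdn_div //.
by rewrite -{1}(divnK dr) mulKn // divn_gt0 // dvdn_leq.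
Qed.

Lemma cycle_order_dvdE d : d %| #[r] ->
  [set y in <[r]> | #[y] %| d] = <[r ^+ (#[r] %/ d)]>.
Proof.
move=> dr; apply/setP=> y; rewrite !inE; apply/andP/idP => [[ry yd]|].
  rewrite -cycle_subG -(cardSg_cyclic (cycle_cyclic r)) ?cycle_subG ?groupX ?cycle_id //.
  by rewrite -!orderE order_expg_divn.
move=> y_sub; split; first exact: subsetP (cycleX r _) y y_sub.
by rewrite -(order_expg_divn dr) order_dvdG.
Qed.

Lemma card_cycle_order_dvd d : d %| #[r] -> #|[set y in <[r]> | #[y] %| d]| = d.
Proof. by move=> dr; rewrite cycle_order_dvdE // -orderE order_expg_divn. Qed.

Lemma card_cycle_order_eq d : d %| #[r] ->
  #|[set y in <[r]> | #[y] == d]| = totient d.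
Proof.
move=> dr; rewrite -[in RHS](order_expg_divn dr) totient_gen.
apply: eq_card => y; rewrite !inE /generator.
apply/andP/idP => [[ry /eqP oy]|gy].
  rewrite (eq_subG_cyclic (cycle_cyclic r)) ?cycleX ?cycle_subG //.
  by rewrite -!orderE oy order_expg_divn.
split; first exact: subsetP (cycleX r _) y (cycle_generator gy).
by rewrite -(generator_order gy) order_expg_divn.
Qed.

Lemma card_cycle_order_mul m : m %| #[r] ->
  #|[set y in <[r]> | m %| #[y]]| = (\sum_(l <- divisors (#[r] %/ m)) totient (l * m))%N.
Proof.
move=> mr; have m_gt0 : (0 < m)%N by rewrite (dvdn_gt0 (order_gt0 r)).
have rm_gt0 : (0 < #[r] %/ m)%N by rewrite divn_gt0 // dvdn_leq.
rewrite (@card_fibers _ _ (fun y => #[y] %/ m) _ (divisors_uniq (#[r] %/ m))); last first.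
  move=> y; rewrite inE -dvdn_divisors // => /andP[ry my].
  by rewrite dvdn_divLR // divnK // order_dvdG.
apply: eq_big_seq => l; rewrite -dvdn_divisors // => l_dvd.
rewrite -card_cycle_order_eq -?dvdn_divRL //; apply: eq_card => y; rewrite !inE.
case: (y \in <[r]>) => //=; apply/andP/eqP => [[my /eqP <-]|->].
  by rewrite divnK.
by rewrite dvdn_mull // mulnK.
Qed.

Lemma card_cycle_od_rel m : m %| #[r] ->
  (#|[set y in <[r]> | od_rel m #[y]]| + 2 * totient m =
   m + \sum_(l <- divisors (#[r] %/ m)) totient (l * m))%N.
Proof.
move=> mr; rewrite -card_cycle_order_eq // -card_cycle_order_mul //.
rewrite -[in X in (_ = X + _)%N](card_cycle_order_dvd mr).
set D := [set y in _ | #[y] %| m]; set M := [set y in _ | m %| #[y]].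
set E := [set y in _ | #[y] == m]; set P := [set y in _ | od_rel m #[y]].
have DME : D :&: M = E.
  by apply/setP=> y; rewrite !inE eqn_dvd; case: (y \in _); case: (_ %| _).
have DMEP : (D :|: M) :\: E = P.
  apply/setP=> y; rewrite !inE /od_rel eqn_dvd.
  by case: (y \in _); case: (_ %| _); case: (_ %| _).
have DMEE : (D :|: M) :&: E = E by apply/setIidPr; rewrite -DME subIset // subsetUl.
have := cardsUI D M; have := cardsID E (D :|: M).
rewrite DME DMEP DMEE.
by move=> <- <-; rewrite [#|E| + _]addnC -addnA addnn mul2n.
Qed.

End CyclicOrderCount.

Lemma dihedral_rotation n : 1 < n ->
  exists2 r : 'D_(n.*2), #[r] = n & {in ~: <[r]>, forall g, #[g] = 2}.
Proof.
move=> n_gt1; have := isog_refl 'D_(n.*2).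
case/(isoGrpP _ (Grp_dihedral n_gt1)) => oG /existsP[[x y] /= /eqP[defG xn y2 xy]].
have{} defG : <[x]> * <[y]> = 'D_(n.*2).
  by rewrite -norm_joinEr // norms_cycle xy groupV cycle_id.
have Xy : y \notin <[x]>.
  apply: contraL (ltn_Pmull (isT : 1 < 2) (ltnW n_gt1)) => Xy.
  rewrite -leqNgt mul2n -{1}(card_dihedral n_gt1) -defG mulGSid ?cycle_subG //.
  by rewrite dvdn_leq ?(ltnW n_gt1) // order_dvdn xn.
have oy : #[y] = 2 by apply: nt_prime_order (group1_contra Xy).
have ox : #[x] = n.
  apply: double_inj; rewrite -[RHS](card_dihedral n_gt1) -defG TI_cardMg -?orderE ?oy ?muln2 //.
  by rewrite setIC prime_TIg ?cycle_subG // -orderE oy.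
exists x => // g; rewrite inE => Xg.
have : g \in <[x]> * <[y]> by rewrite defG inE.
case/mulsgP=> a b /cycleP[i ->] Yb defg.
have b_y : b = y.
  apply/eqP; move: Yb; rewrite cycle2g // !inE; case: eqP => // b1.
  by rewrite defg b1 mulg1 mem_cycle in Xg.
have yV : y^-1 = y by rewrite -[y^-1]mul1g -y2 expgS expg1 mulgK.
have xiJ : y * (x ^+ i * y) = (x ^+ i)^-1.
  by rewrite -{1}yV -[_ * (_ * y)]/((x ^+ i) ^ y) conjXg xy expgVn.
apply: nt_prime_order => //; last by apply: contraNneq Xg => ->; rewrite group1.
by rewrite defg b_y expgS expg1 -mulgA xiJ mulgV.
Qed.

Section RotationsAndReflections.
Variables (gT : finGroupType) (r : gT).
Hypothesis reflection_order : {in ~: <[r]>, forall g, #[g] = 2}.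

Lemma od_deg_split x : od_deg [set: gT] x =
  (#|[set y in <[r]> | od_rel #[x] #[y]]| + (if od_rel #[x] 2 then #|~: <[r]>| else 0))%N.
Proof.
rewrite /od_deg -[LHS](cardsID <[r]>); congr (_ + _)%N.
  by apply: eq_card => y; rewrite !inE od_adjE andbC.
case: ifP => rel2; [apply: eq_card | apply: eq_card0] => y; rewrite !inE od_adjE;
  by case: (boolP (y \in <[r]>)) => //= ry; rewrite [#[y]]reflection_order ?inE ?rel2.
Qed.

Lemma od_degE x : #[x] %| #[r] ->
  (od_deg [set: gT] x + 2 * totient #[x] =
   #[x] + \sum_(l <- divisors (#[r] %/ #[x])) totient (l * #[x])
   + (if od_rel #[x] 2 then #|~: <[r]>| else 0))%N.
Proof. by move=> xr; rewrite od_deg_split addnAC card_cycle_od_rel. Qed.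

End RotationsAndReflections.

Theorem mainTheorem18 (n : nat) (x : 'D_(n.*2)) :
  3 <= n -> ~~ odd n ->
  let m := #[x]%g in
  let S := (\sum_(l <- divisors (n %/ m)) totient (l * m))%N in
  Posz (od_deg [set: 'D_(n.*2)] x) =
    (if m == 1%N then Posz (2 * n - 1)
     else if m == 2%N then Posz (\sum_(l <- divisors (n %/ 2)) totient (2 * l))
     else if odd m then Posz m - 2 * Posz (totient m) + Posz S
     else Posz n + Posz m - 2 * Posz (totient m) + Posz S)%R.
Proof.
move=> n_ge3 n_even m S; have n_gt1 : 1 < n by apply: ltnW.
have [r ord_r reflection_order] := dihedral_rotation n_gt1.
have card_reflections : #|~: <[r]>| = n.
  have := cardsC <[r]>; rewrite -orderE ord_r -cardsT card_dihedral //; lia.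
have m_dvd_n : m %| n.
  case: (boolP (x \in <[r]>)) => rx; first by rewrite -ord_r orderE order_dvdG.
  by rewrite /m reflection_order ?inE // dvdn2.
have := od_degE reflection_order (x := x).
rewrite ord_r -/m -/S card_reflections => /(_ m_dvd_n) deg_eq.
have S_card : S = #|[set y in <[r]> | m %| #[y]]| by rewrite card_cycle_order_mul ord_r.
have S_def : S = (\sum_(l <- divisors (n %/ m)) totient (l * m))%N by [].
clearbody m S; have m_gt0 : 0 < m by rewrite (dvdn_gt0 _ m_dvd_n) // ltnW.
have [m1 | m_ne1] := eqVneq m 1%N.
  have S_n : S = n.
    by rewrite S_card -[RHS]ord_r orderE; apply: eq_card => y; rewrite inE m1 dvd1n andbT.
  have phi1 : totient 1 = 1%N by [].
  by rewrite m1 S_n phi1 /= in deg_eq; congr Posz; lia.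
have [m2 | m_ne2] := eqVneq m 2%N.
  have phi2 : totient 2 = 1%N by [].
  rewrite m2 in deg_eq S_def; rewrite S_def phi2 /= in deg_eq; congr Posz.
  by rewrite (eq_bigr (fun l => totient (l * 2))) => [|l _]; [lia | rewrite mulnC].
have m_ndvd2 : ~~ (m %| 2).
  by apply/negP => /(dvdn_leq (isT : 0 < 2)); move: m_ne1 m_ne2 m_gt0; lia.
rewrite /od_rel (negPf m_ndvd2) eq_sym m_ne2 dvdn2 /= in deg_eq.
by case: (odd m) deg_eq => /= deg_eq; lia.
Qed.
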